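(* The class of induced subgraphs of the square grid is $(6,1)$-disjointness-expressing.
   Context: The square grid is the infinite graph with vertex set $\mathbb{Z}^2$ in which two points are adjacent iff their Euclidean distance is 1; an induced subgraph of the square grid means a finite graph isomorphic to an induced subgraph of it. A class $\mathcal{C}$ of graphs is $(s,\kappa)$-disjointness-expressing if for some constant $\alpha>0$, for every positive integer $N$ and every $X\subseteq\{1,\dots,N\}$ one can define graphs $L(X)$ and $R(X)$, each containing a labelled set $S$ of special vertices, such that for all $A,B\subseteq\{1,\dots,N\}$: (i) the graph $g(L(A),R(B))$ obtained by identifying each vertex of $S$ in $L(A)$ with the corresponding vertex of $S$ in $R(B)$ is connected and has at most $\alpha N^{1/\kappa}$ vertices; (ii) the subgraph of $g(L(A),R(B))$ induced by the closed neighborhood $N[S]$ is independent of $A,B$ (for all $A,A',B,B'$ there is an isomorphism between these induced subgraphs that is the identity on $S$) and has at most $s$ vertices; (iii) $g(L(A),R(B))\in\mathcal{C}$ if and only if $A\cap B=\emptyset$. *)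

From Stdlib Require Import Reals.
From mathcomp Require Import all_boot all_order all_algebra.
Set Implicit Arguments. Unset Strict Implicit. Unset Printing Implicit Defensive.
Import GRing.Theory Num.Theory.

Record fgraph := FGraph { vert : finType; adj : rel vert }.
Arguments adj {f}.

Definition simple_graph (G : fgraph) : Prop :=
  (forall x y : vert G, adj x y = adj y x) /\ (forall x : vert G, ~~ adj x x).

Definition connected_graph (G : fgraph) : Prop :=
  forall x y : vert G, connect (@adj G) x y.

Definition iso_graph (G H : fgraph) (phi : vert G -> vert H) : Prop :=
  bijective phi /\ forall x y, adj (phi x) (phi y) = adj x y.

(* Square grid on Z^2: adjacent iff Euclidean distance is 1,
   i.e. squared Euclidean distance equals 1. *)
Definition grid_adj (p q : int * int) : bool :=
  ((p.1 - q.1) ^+ 2 + (p.2 - q.2) ^+ 2 == 1)%R.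

Definition grid_induced (G : fgraph) : Prop :=
  exists f : vert G -> int * int,
    injective f /\ forall x y, adj x y = grid_adj (f x) (f y).

Definition induced (G : fgraph) (A : {set vert G}) : fgraph :=
  @FGraph {x : vert G | x \in A} (fun x y => adj (val x) (val y)).

Record lgraph (k : nat) := LGraph { lg : fgraph; lab : 'I_k -> vert lg }.

Definition good_lgraph k (L : lgraph k) : Prop :=
  simple_graph (lg L) /\ injective (lab L).

Section Glue.
Variables (k : nat) (L R : lgraph k).

Definition glue_keep (x : vert (lg L) + vert (lg R)) : bool :=
  match x with inl _ => true | inr v => v \notin codom (lab R) end.

Definition glue_rmap (v : vert (lg R)) : vert (lg L) + vert (lg R) :=
  match [pick i | lab R i == v] with Some i => inl (lab L i) | None => inr v end.

Definition glue_adj (x y : {x | glue_keep x}) : bool :=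
  [exists a, exists b, adj a b && (inl a == val x) && (inl b == val y)] ||
  [exists a, exists b, adj a b && (glue_rmap a == val x) && (glue_rmap b == val y)].

(* g(L,R): identify each special vertex of L with the same-labelled one of R *)
Definition glue : fgraph := @FGraph {x | glue_keep x} glue_adj.

Definition glue_sp (i : 'I_k) : vert glue :=
  exist (fun x => is_true (glue_keep x)) (inl (lab L i)) isT.
End Glue.

Definition closed_nbhd (G : fgraph) k (sp : 'I_k -> vert G) : {set vert G} :=
  [set x | [exists i, x == sp i] || [exists i, adj x (sp i)]].

Definition glue_NS k (L R : lgraph k) : {set vert (glue L R)} :=
  closed_nbhd (@glue_sp k L R).

(* (s, kappa)-disjointness-expressing; subsets of {1..N} are represented as
   subsets of 'I_N = {0..N-1}. *)
Definition disjointness_expressing (C : fgraph -> Prop) (s kappa : nat) : Prop :=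
  exists alpha : R, Rlt 0 alpha /\
  forall N : nat, (0 < N)%N ->
  exists k : nat, exists Lf Rf : {set 'I_N} -> lgraph k,
    (forall X, good_lgraph (Lf X) /\ good_lgraph (Rf X)) /\
    (forall A B : {set 'I_N},
       connected_graph (glue (Lf A) (Rf B)) /\
       Rle (INR #|vert (glue (Lf A) (Rf B))|) (Rmult alpha (Rpower (INR N) (Rinv (INR kappa))))) /\
    (forall A A' B B' : {set 'I_N},
       exists phi : vert (induced (glue_NS (Lf A) (Rf B))) ->
                    vert (induced (glue_NS (Lf A') (Rf B'))),
         iso_graph phi /\
         forall x i, val x = glue_sp (Lf A) (Rf B) i ->
                     val (phi x) = glue_sp (Lf A') (Rf B') i) /\
    (forall A B : {set 'I_N}, (#|glue_NS (Lf A) (Rf B)| <= s)%N) /\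
    (forall A B : {set 'I_N},
       C (glue (Lf A) (Rf B)) <-> A :&: B = set0).

From Pilot Require Import Defs.
From Stdlib Require Import Reals Lra.
From mathcomp Require Import all_boot all_order all_algebra zify ring.
Set Implicit Arguments. Unset Strict Implicit. Unset Printing Implicit Defensive.
Import GRing.Theory Num.Theory.

(* Work in the grid with columns 0..2N+7 and rows 0..5.  L(A) is a band of
   width two bent into a U (rows 4-5, columns 0-1, rows 0-1 up to column 3)
   with a tooth (2i+6, 3) hanging from row 4 for each i in A; R(B) prolongs
   rows 0-1 from column 3 on, with a tooth (2i+6, 2) standing on row 1 for each
   i in B.  They are glued along S = {(3,0), (3,1)}, whose closed neighbourhood
   is always the 3x2 box around S.  Drawn this way, g(L(A),R(B)) is an induced
   subgraph of the grid unless two teeth meet, i.e. unless A and B intersect.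
   Conversely, every 4-cycle of the grid is a unit square, so an induced
   embedding maps the band by an isometry of the grid; for i in A and B it then
   sends the two teeth of column 2i+6, which are not adjacent in g(L(A),R(B)),
   to adjacent grid points. *)

Local Open Scope ring_scope.

Definition unit_vec (u : int * int) : bool := `|u.1| + `|u.2| == 1.
Definition dot (u v : int * int) : int := u.1 * v.1 + u.2 * v.2.

Lemma dotC : commutative dot.
Proof. by move=> u v; rewrite /dot mulrC [_.2 * _]mulrC. Qed.

Lemma dotNr u v : dot u (- v) = - dot u v.
Proof. by rewrite /dot /= !mulrN opprD. Qed.

Lemma sqr_add_sqr_eq1 (x y : int) : (x ^+ 2 + y ^+ 2 == 1) = (`|x| + `|y| == 1).
Proof.
apply/eqP/eqP => [|h].
  rewrite !expr2 => h.
  have : (x = 1 \/ x = -1) /\ y = 0 \/ x = 0 /\ (y = 1 \/ y = -1) by nia.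
  lia.
have : (x = 1 \/ x = -1) /\ y = 0 \/ x = 0 /\ (y = 1 \/ y = -1) by lia.
by case=> [[[->|->] ->]|[-> [->|->]]].
Qed.

Lemma grid_adjE (p q : int * int) : grid_adj p q = unit_vec (p - q).
Proof. exact: sqr_add_sqr_eq1. Qed.

Lemma grid_adjC : symmetric grid_adj.
Proof. by move=> p q; rewrite !grid_adjE /unit_vec /=; apply/eqP/eqP; lia. Qed.

Lemma unit_vecN u : unit_vec (- u) = unit_vec u.
Proof. by rewrite /unit_vec /= !normrN. Qed.

Lemma unit_vecP u :
  unit_vec u -> u \in [:: (1, 0); (-1, 0); (0, 1); (0, -1)].
Proof. by case: u => a b; rewrite /unit_vec !inE !xpair_eqE /= => /eqP; lia. Qed.

Lemma pairP (p q : int * int) : p.1 = q.1 -> p.2 = q.2 -> p = q.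
Proof. by case: p q => [? ?] [? ?] /= -> ->. Qed.

Ltac case_unit_vec := move=> /unit_vecP; rewrite !inE => /or4P [] /eqP ->.

Ltac to_components := rewrite ?grid_adjE /unit_vec ?/dot -?pair_eqE /=.

Lemma square_completion (a u v c : int * int) :
  unit_vec u -> unit_vec v -> u != v ->
  grid_adj (a + u) c -> grid_adj c (a + v) -> c != a ->
  dot u v = 0 /\ c = a + u + v.
Proof.
by case_unit_vec; case_unit_vec; to_components => *; (split; [|apply: pairP]) => /=; lia.
Qed.

Lemma perp_unit_vec (u v w : int * int) :
  unit_vec u -> unit_vec v -> unit_vec w -> dot u v = 0 -> dot w v = 0 ->
  w = u \/ w = - u.
Proof.
case_unit_vec; case_unit_vec; case_unit_vec; rewrite /dot /= => ? ?;
  by [left | right | exfalso; lia].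
Qed.

Lemma grid_neighbour (q r u v : int * int) :
  unit_vec u -> unit_vec v -> dot u v = 0 -> grid_adj q r ->
  r != q + u -> r != q - u -> r != q + v -> r = q - v.
Proof.
by case_unit_vec; case_unit_vec; to_components => *; apply: pairP => /=; lia.
Qed.

Lemma ladder_step (p u v c d : int * int) :
  unit_vec u -> unit_vec v -> dot u v = 0 ->
  grid_adj (p + u) c -> grid_adj c d -> grid_adj d (p + u + v) ->
  c != p -> c != p + u + v -> d != p + u ->
  c = p + u + u /\ d = p + u + u + v.
Proof.
move=> uu uv uv0 puc cd dpuv cp cpuv dpu.
have uc : unit_vec (c - (p + u)) by rewrite -grid_adjE grid_adjC.
have vc : v != c - (p + u).
  by apply: contra cpuv => /eqP ->; rewrite addrC subrK.
have [perp ->] : dot v (c - (p + u)) = 0 /\ d = p + u + v + (c - (p + u)).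
  apply: square_completion => //; first by rewrite grid_adjC.
  by rewrite subrKC grid_adjC.
rewrite dotC in perp.
have ceq : c = p + u + (c - (p + u)) by rewrite addrC subrK.
have [cu|cu] := perp_unit_vec uu uv uc uv0 perp.
  by rewrite cu {1}ceq cu; split; ring.
by move: cp; rewrite ceq cu addrK eqxx.
Qed.

Local Close Scope ring_scope.

Section Ladder.
Variables (n : nat) (F G : nat -> int * int).
Hypotheses (n_gt1 : 1 < n)
  (rung_adj : forall i, i < n -> grid_adj (F i) (G i))
  (F_adj : forall i, i.+1 < n -> grid_adj (F i) (F i.+1))
  (G_adj : forall i, i.+1 < n -> grid_adj (G i) (G i.+1))
  (F_inj : forall i j, i < n -> j < n -> F i = F j -> i = j)
  (FG_neq : forall i j, i < n -> j < n -> F i != G j).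

Lemma ladder_rigid : let U := (F 1 - F 0)%R in let V := (G 0 - F 0)%R in
  [/\ unit_vec U, unit_vec V, dot U V = 0%R &
      forall i, i < n -> F i = (F 0 + U *+ i)%R /\ G i = (F i + V)%R].
Proof.
move=> U V; have F1 : (F 0 + U)%R = F 1 by rewrite subrKC.
have G0 : (F 0 + V)%R = G 0 by rewrite subrKC.
have uU : unit_vec U by rewrite -grid_adjE grid_adjC F_adj.
have uV : unit_vec V by rewrite -grid_adjE grid_adjC rung_adj // ltnW.
clearbody U V.
have [UV G1] : dot U V = 0%R /\ G 1 = (F 0 + U + V)%R.
  apply: square_completion; rewrite ?F1 ?G0 ?rung_adj // 1?grid_adjC ?G_adj //.
    apply: contraNneq (FG_neq n_gt1 (ltnW n_gt1)) => eUV.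
    by rewrite -F1 -G0 eUV.
  by rewrite eq_sym FG_neq // ltnW.
have step i : i.+1 < n -> [/\ F i = (F 0 + U *+ i)%R, F i.+1 = (F 0 + U *+ i.+1)%R,
                              G i = (F i + V)%R & G i.+1 = (F i.+1 + V)%R].
  elim: i => [_|i IH lt_in]; first by rewrite mulr0n addr0 mulr1n F1 G0 G1 F1.
  have [Fi Fi1 Gi Gi1] := IH (ltnW lt_in).
  have [Fi2 Gi2] : F i.+2 = (F i + U + U)%R /\ G i.+2 = (F i + U + U + V)%R.
    have FiU : (F i + U)%R = F i.+1 by rewrite Fi1 Fi mulrSr addrA.
    apply: ladder_step; rewrite ?FiU -?Gi1 ?F_adj ?rung_adj 1?grid_adjC ?G_adj //.
    - by apply/eqP => /(F_inj lt_in (ltnW (ltnW lt_in))); lia.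
    - exact: FG_neq lt_in (ltnW lt_in).
    - by rewrite eq_sym; apply: FG_neq (ltnW lt_in) lt_in.
  by split=> //; [rewrite Fi2 Fi !mulrSr !addrA | rewrite Gi2 Fi2].
split=> // -[|i] lt_in; first by rewrite mulr0n addr0 G0.
by have [] := step i lt_in.
Qed.

End Ladder.

Definition zpoint (p : nat * nat) : int * int := (p.1%:Z, p.2%:Z)%R.

Lemma zpoint_inj : injective zpoint.
Proof. by move=> [? ?] [? ?] [-> ->]. Qed.

Section FrameRigidity.
Variables (W : nat) (F : nat * nat -> int * int).

Definition frame : {pred nat * nat} :=
  [pred p | [&& p.1 < W, p.2 < 6 & [|| p.2 <= 1, 4 <= p.2 | p.1 <= 1]]].

Hypotheses (W_gt1 : 1 < W) (F_inj : {in frame &, injective F})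
  (F_adj : {in frame &, forall p q, grid_adj (zpoint p) (zpoint q) -> grid_adj (F p) (F q)}).

Ltac frame_arith := rewrite /= ?inE ?xpair_eqE ?grid_adjE /unit_vec /=; lia.

Lemma frame_neq : {in frame &, forall p q, p != q -> F p != F q}.
Proof. by move=> p q hp hq; apply: contra_neq; apply: F_inj. Qed.

Ltac ladder_side := first
  [ by move=> i hi; apply: F_adj; frame_arith
  | by move=> i j hi hj /eqP; apply: contraTeq => ne; apply: frame_neq; frame_arith
  | by move=> i j hi hj; apply: frame_neq; frame_arith ].

(* The three ladders (columns 0-1, rows 0-1, rows 4-5) overlap in their corner
   squares, so their affine descriptions fit together. *)
Lemma frame_rigid : exists P U V, [/\ unit_vec U, unit_vec V, dot U V = 0%R &
  {in frame, forall p, F p = (P + U *+ p.1 + V *+ p.2)%R}].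
Proof.
have [] := @ladder_rigid 6 (fun i => F (0, i)) (fun i => F (1, i)) isT; try ladder_side.
move=> uV uU VU col.
have [] := @ladder_rigid W (fun i => F (i, 0)) (fun i => F (i, 1)) W_gt1; try ladder_side.
move=> _ _ _ bot.
have [] := @ladder_rigid W (fun i => F (i, 4)) (fun i => F (i, 5)) W_gt1; try ladder_side.
move=> _ _ _ top.
exists (F (0, 0)), (F (1, 0) - F (0, 0))%R, (F (0, 1) - F (0, 0))%R.
split=> //; first by rewrite dotC.
have [c4 c14] := col 4 isT; have [c5 _] := col 5 isT.
move=> [x y]; rewrite inE /= => /and3P [xW y6 /or3P [y1|y4|x1]].
- have [b0 b1] := bot x xW.
  by case: y y1 {y6} => [|[|//]] _; rewrite ?b1 b0; ring.
- have [t4 t5] := top x xW.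
  by case: y y4 y6 => [|[|[|[|[|[|//]]]]]] // _ _; rewrite ?t5 t4 c14 ?c5 c4; ring.
- have [c0 c1] := col y y6.
  by case: x x1 {xW} => [|[|//]] _; rewrite ?c1 c0; ring.
Qed.

Lemma frame_teeth_adj d t b : d.+2 < W ->
  grid_adj (F (d.+1, 4)) t -> t != F (d.+2, 4) -> t != F (d, 4) -> t != F (d.+1, 5) ->
  grid_adj (F (d.+1, 1)) b -> b != F (d.+2, 1) -> b != F (d, 1) -> b != F (d.+1, 0) ->
  grid_adj t b.
Proof.
move=> d2_lt t_adj t_ne1 t_ne2 t_ne3 b_adj b_ne1 b_ne2 b_ne3.
have d1_lt : d.+1 < W := ltnW d2_lt; have d_lt : d < W := ltnW d1_lt.
have [P [U [V [uU uV UV F_aff]]]] := frame_rigid.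
have F_row x y : x < W -> (y <= 1) || (4 <= y < 6) -> F (x, y) = (P + U *+ x + V *+ y)%R.
  by move=> x_lt y_row; rewrite F_aff // inE /=; lia.
have t_eq : t = (F (d.+1, 4) - V)%R.
  apply: (grid_neighbour uU uV UV t_adj).
  - by have -> : (F (d.+1, 4) + U)%R = F (d.+2, 4) by rewrite !F_row //; ring.
  - by have -> : (F (d.+1, 4) - U)%R = F (d, 4) by rewrite !F_row //; ring.
  - by have -> : (F (d.+1, 4) + V)%R = F (d.+1, 5) by rewrite !F_row //; ring.
have b_eq : b = (F (d.+1, 1) - - V)%R.
  apply: (grid_neighbour uU _ _ b_adj); rewrite ?unit_vecN ?dotNr ?UV ?oppr0 //.
  - by have -> : (F (d.+1, 1) + U)%R = F (d.+2, 1) by rewrite !F_row //; ring.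
  - by have -> : (F (d.+1, 1) - U)%R = F (d, 1) by rewrite !F_row //; ring.
  - by have -> : (F (d.+1, 1) + - V)%R = F (d.+1, 0) by rewrite !F_row //; ring.
rewrite grid_adjE t_eq b_eq !F_row //.
suff -> : (P + U *+ d.+1 + V *+ 4 - V - (P + U *+ d.+1 + V *+ 1 - - V))%R = V by [].
by ring.
Qed.

End FrameRigidity.

Lemma connect_descent (T : finType) (e : rel T) (r : T) (phi : T -> nat) :
  (forall x, x != r -> exists2 y, e x y & phi y < phi x) -> forall x, connect e x r.
Proof.
move=> descent x; have [n] := ubnP (phi x); elim: n x => // n IH x lt_xn.
have [->|/descent [y xy lt_yx]] := eqVneq x r; first exact: connect0.
by apply: connect_trans (connect1 xy) (IH y _); apply: leq_trans lt_yx _.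
Qed.

Lemma connected_descent (G : Defs.fgraph) (r : vert G) (phi : vert G -> nat) :
  symmetric (@adj G) -> (forall x, x != r -> exists2 y, adj x y & phi y < phi x) ->
  connected_graph G.
Proof.
move=> adjC descent x y; have := connect_descent descent.
by move=> xr; apply: connect_trans (xr x) _; rewrite (sym_connect_sym adjC) xr.
Qed.

Section GlueInduced.
Variables (H : Defs.fgraph) (k : nat) (sp : 'I_k -> vert H).

Definition induced_lgraph (S : {set vert H}) (spS : forall i, sp i \in S) : lgraph k :=
  @LGraph k (induced S) (fun i => Sub (sp i) (spS i)).

Lemma induced_lgraph_good (S : {set vert H}) (spS : forall i, sp i \in S) :
  injective sp -> symmetric (@adj H) -> irreflexive (@adj H) ->
  good_lgraph (induced_lgraph spS).
Proof.
move=> sp_inj adjC adj_irr; split.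
  by split=> [x y|x]; [apply: adjC | rewrite /= adj_irr].
by move=> i j /(congr1 val) /sp_inj.
Qed.

Variables (SL SR : {set vert H}).
Hypotheses (spL : forall i, sp i \in SL) (spR : forall i, sp i \in SR)
  (SLR : forall x, x \in SL -> x \in SR -> x \in codom sp).

Local Notation GL := (induced_lgraph spL).
Local Notation GR := (induced_lgraph spR).
Local Notation G := (glue GL GR).

Definition sum_pos (x : vert (lg GL) + vert (lg GR)) : vert H :=
  match x with inl a => val a | inr b => val b end.

Definition glue_pos (u : vert G) : vert H := sum_pos (val u).

Lemma glue_rmapE (b : vert (lg GR)) :
  sum_pos (@glue_rmap k GL GR b) = val b /\ glue_keep (@glue_rmap k GL GR b).
Proof.
rewrite /glue_rmap; case: pickP => [i /eqP <- //|nolab]; split=> //=.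
by apply/codomP => -[i bi]; move: (nolab i); rewrite bi eqxx.
Qed.

Lemma keep_inr (b : vert (lg GR)) :
  glue_keep (inr b : vert (lg GL) + _) -> sval b \notin SL.
Proof.
move=> kb; apply/negP => bL; have /codomP [i bi] := SLR bL (valP b).
by move: kb => /= /negP; apply; apply/codomP; exists i; apply: val_inj.
Qed.

Lemma sum_pos_inj (x y : vert (lg GL) + vert (lg GR)) :
  glue_keep x -> glue_keep y -> sum_pos x = sum_pos y -> x = y.
Proof.
have LR (a : vert (lg GL)) (b : vert (lg GR)) :
    glue_keep (inr b : vert (lg GL) + _) -> sval a != sval b.
  by move=> /keep_inr; apply: contraNneq => <-; apply: valP.
case: x y => [a|b] [a'|b'] /= ka kb ab.
- by congr inl; apply: val_inj.
- by move: (LR a b' kb); rewrite ab eqxx.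
- by move: (LR a' b ka); rewrite ab eqxx.
- by congr inr; apply: val_inj.
Qed.

Lemma glue_pos_inj : injective glue_pos.
Proof. by move=> u w /sum_pos_inj eq_uw; apply: val_inj; apply: eq_uw; apply: valP. Qed.

Lemma glue_pos_in u : glue_pos u \in SL :|: SR.
Proof.
by rewrite inE /glue_pos; case: (val u) => [a|b]; [rewrite (valP a) | rewrite (valP b) orbT].
Qed.

Lemma glue_pos_onto x : x \in SL :|: SR -> exists u, glue_pos u = x.
Proof.
case/setUP => [xL|xR]; first by exists (Sub (inl (Sub x xL)) isT).
have [posb keepb] := glue_rmapE (Sub x xR).
by exists (Sub _ keepb).
Qed.

Lemma glue_pos_inl u : glue_pos u \in SL -> exists a, val u = inl a.
Proof.
case: u => [[a|b] kb] /=; first by exists a.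
by rewrite /glue_pos /= (negPf (keep_inr kb)).
Qed.

Lemma glue_adjE u w : adj u w = adj (glue_pos u) (glue_pos w) &&
  ((glue_pos u \in SL) && (glue_pos w \in SL) || (glue_pos u \in SR) && (glue_pos w \in SR)).
Proof.
rewrite andb_orr; congr orb; apply/existsP/idP.
- case=> a /existsP [b /andP [/andP [ab /eqP ua] /eqP wb]].
  by rewrite /glue_pos -ua -wb; apply/and3P; split; [exact: ab | exact: valP..].
- case/andP=> uw /andP [/glue_pos_inl [a ua] /glue_pos_inl [b wb]].
  exists a; apply/existsP; exists b; rewrite ua wb !eqxx !andbT.
  by rewrite /glue_pos ua wb in uw.
- case=> a /existsP [b /andP [/andP [ab /eqP ua] /eqP wb]].
  have [pa _] := glue_rmapE a; have [pb _] := glue_rmapE b.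
  by rewrite /glue_pos -ua -wb pa pb; apply/and3P; split; [exact: ab | exact: valP..].
- case/andP=> uw /andP [uR wR].
  pose a : vert (lg GR) := Sub (glue_pos u) uR.
  pose b : vert (lg GR) := Sub (glue_pos w) wR.
  exists a; apply/existsP; exists b.
  have [pa ka] := glue_rmapE a; have [pb kb] := glue_rmapE b.
  rewrite -andbA; apply/and3P; split; [exact: uw | apply/eqP | apply/eqP].
  + by apply: sum_pos_inj ka (valP u) _; rewrite pa.
  + by apply: sum_pos_inj kb (valP w) _; rewrite pb.
Qed.

End GlueInduced.

Section Construction.
Variable N : nat.

Definition width := N.*2 + 8.
Local Notation cell := ('I_width * 'I_6)%type.

Definition coord (c : cell) : nat * nat := (val c.1, val c.2).

Definition host : Defs.fgraph :=
  @FGraph cell (fun c d => grid_adj (zpoint (coord c)) (zpoint (coord d))).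

Definition tooth (X : {set 'I_N}) (x : nat) : bool := [exists i in X, x == i.*2 + 6].

Definition in_left (A : {set 'I_N}) : pred (nat * nat) := fun p =>
  [|| 4 <= p.2, p.1 <= 1, (p.2 <= 1) && (p.1 <= 3) | (p.2 == 3) && tooth A p.1].

Definition in_right (B : {set 'I_N}) : pred (nat * nat) := fun p =>
  (p.2 <= 1) && (3 <= p.1) || (p.2 == 2) && tooth B p.1.

Definition left_cells A : {set vert host} := [set c | in_left A (coord c)].
Definition right_cells B : {set vert host} := [set c | in_right B (coord c)].

Lemma three_lt_width : 3 < width. Proof. rewrite /width; lia. Qed.

Definition special (i : 'I_2) : vert host :=
  (Ordinal three_lt_width, widen_ord (isT : 2 <= 6) i).

Lemma special_inj : injective special.
Proof. by move=> i j [/val_inj]. Qed.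

Lemma special_left A i : special i \in left_cells A.
Proof. by rewrite inE /in_left /=; case: i => -[|[]]. Qed.

Lemma special_right B i : special i \in right_cells B.
Proof. by rewrite inE /in_right /=; case: i => -[|[]]. Qed.

Definition left_graph A : lgraph 2 := induced_lgraph (special_left A).
Definition right_graph B : lgraph 2 := induced_lgraph (special_right B).

Lemma tooth_bound X x : tooth X x -> 6 <= x <= N.*2 + 4.
Proof. by case/exists_inP => i _ /eqP ->; have := ltn_ord i; lia. Qed.

Lemma host_adjC : symmetric (@adj host).
Proof. by move=> c d; apply: grid_adjC. Qed.

Lemma host_adj_irr : irreflexive (@adj host).
Proof. by move=> c; rewrite /= grid_adjE subrr. Qed.

Lemma good_left_graph A : good_lgraph (left_graph A).
Proof.
by apply: induced_lgraph_good; [exact: special_inj | exact: host_adjC | exact: host_adj_irr].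
Qed.

Lemma good_right_graph B : good_lgraph (right_graph B).
Proof.
by apply: induced_lgraph_good; [exact: special_inj | exact: host_adjC | exact: host_adj_irr].
Qed.

Ltac tooth_cases X x := have := @tooth_bound X x; case: (tooth X x).

Lemma cells_inter A B c : c \in left_cells A -> c \in right_cells B -> c \in codom special.
Proof.
case: c => x y; rewrite !inE /in_left /in_right /= => cL cR.
have [x3 y2] : x = 3 :> nat /\ y < 2 by move: cL cR; tooth_cases A x; tooth_cases B x; lia.
by apply/codomP; exists (Ordinal y2); congr pair; apply: val_inj.
Qed.

Lemma coord_inj : injective coord.
Proof. by move=> [x y] [x' y'] [/val_inj -> /val_inj ->]. Qed.

Definition layout_adj A B (p q : nat * nat) : bool := grid_adj (zpoint p) (zpoint q) &&
  (in_left A p && in_left A q || in_right B p && in_right B q).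

Section Glued.
Variables A B : {set 'I_N}.
Local Notation G := (glue (left_graph A) (right_graph B)).

Definition pos (u : vert G) : nat * nat := coord (glue_pos u).

Definition region (p : nat * nat) : bool :=
  [&& p.1 < width, p.2 < 6 & in_left A p || in_right B p].

Definition vertex_at (p : nat * nat) : vert G :=
  odflt (glue_sp (left_graph A) (right_graph B) ord0) [pick u | pos u == p].

Lemma pos_inj : injective pos.
Proof. by move=> u w /coord_inj /(glue_pos_inj (@cells_inter A B)). Qed.

Lemma pos_region u : region (pos u).
Proof.
have := glue_pos_in u.
by rewrite /region /pos !inE !ltn_ord.
Qed.

Lemma vertex_atK p : region p -> pos (vertex_at p) = p.
Proof.
case: p => x y /and3P [/= x_lt y_lt xyLR].
have [u uc] : exists u : vert G, glue_pos u = (Ordinal x_lt, Ordinal y_lt).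
  by apply: glue_pos_onto; rewrite !inE.
rewrite /vertex_at; case: pickP => [w /eqP //|no_u].
by move: (no_u u); rewrite /pos uc eqxx.
Qed.

Lemma vertex_at_pos u : vertex_at (pos u) = u.
Proof. by apply: pos_inj; rewrite vertex_atK // pos_region. Qed.

Lemma adj_pos u w : adj u w = layout_adj A B (pos u) (pos w).
Proof. by rewrite (glue_adjE (@cells_inter A B)) !inE. Qed.

Ltac split_teeth :=
  repeat match goal with |- context [tooth ?X ?x] => tooth_cases X x end.

Ltac layout_arith :=
  rewrite /region /layout_adj /in_left /in_right /width ?xpair_eqE ?grid_adjE /unit_vec /=;
  split_teeth; lia.

(* Teeth step back onto row 4 or row 1, rows are walked leftwards down to
   column 1, and column 0 downwards to the origin. *)
Definition potential (p : nat * nat) : nat := 10 * p.1 +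
  (if p.1 <= 1 then p.2 else if p.2 == 3 then 9 else if p.2 == 2 then 8 else p.2).

Lemma layout_descent p : region p -> p != (0, 0) ->
  exists2 q, region q && layout_adj A B p q & potential q < potential p.
Proof.
case: p => x y p_in p_ne.
exists (if x <= 1 then (if x == 1 then (0, y) else (0, y.-1))
        else if y == 3 then (x, 4) else if y == 2 then (x, 1) else (x.-1, y)).
all: move: p_in p_ne; rewrite /potential; repeat case: ifP => /= ?; layout_arith.
Qed.

Lemma layout_adjC : symmetric (layout_adj A B).
Proof.
by move=> p q; rewrite /layout_adj grid_adjC (andbC (in_left A q)) (andbC (in_right B q)).
Qed.

Lemma glued_connected : connected_graph G.
Proof.
apply: (connected_descent (r := vertex_at (0, 0)) (phi := fun u => potential (pos u))).
  by move=> u w; rewrite !adj_pos layout_adjC.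
move=> u u_ne; have pu_ne : pos u != (0, 0) by apply: contraNneq u_ne => <-; rewrite vertex_at_pos.
have [q /andP [q_in uq] lt_qu] := layout_descent (pos_region u) pu_ne.
by exists (vertex_at q); rewrite ?adj_pos vertex_atK.
Qed.

Lemma card_glued : #|vert G| <= 6 * width.
Proof.
have := leq_card (fun u : vert G => glue_pos u) (glue_pos_inj (@cells_inter A B)).
by rewrite card_prod !card_ord mulnC.
Qed.

Lemma tooth_common x : tooth A x -> tooth B x -> exists i, i \in A :&: B.
Proof.
case/exists_inP=> i iA /eqP ->; case/exists_inP=> j jB /eqP eij.
by exists i; rewrite inE iA (_ : i = j) //; apply: val_inj => /=; lia.
Qed.

Lemma layout_adj_cross p q : region p -> region q -> grid_adj (zpoint p) (zpoint q) ->
  layout_adj A B p q || tooth A p.1 && tooth B p.1.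
Proof.
(* [lia] treats [tooth A x] and [tooth A x'] as unrelated atoms. *)
by case: p q => x y [x' y']; have [<-|?] := eqVneq x' x; layout_arith.
Qed.

Lemma glued_grid_induced : A :&: B = set0 -> grid_induced G.
Proof.
move=> AB0; exists (fun u => zpoint (pos u)); split; first by move=> u w /zpoint_inj /pos_inj.
move=> u w; rewrite adj_pos; case g: (grid_adj _ _); last by rewrite /layout_adj g.
have /orP [//|/andP [tA tB]] := layout_adj_cross (pos_region u) (pos_region w) g.
by have [i] := tooth_common tA tB; rewrite AB0 inE.
Qed.

Lemma frame_region p : p \in frame width -> region p.
Proof. by case: p => x y; rewrite inE; layout_arith. Qed.

Lemma frame_layout_adj p q : p \in frame width -> q \in frame width ->
  grid_adj (zpoint p) (zpoint q) -> layout_adj A B p q.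
Proof. by case: p q => x y [x' y']; rewrite !inE; layout_arith. Qed.

Lemma width_gt1 : 1 < width. Proof. rewrite /width; lia. Qed.

Ltac tooth_arith := match goal with
  tA : is_true (tooth A _), tB : is_true (tooth B _) |- _ => move: tA tB; layout_arith end.

Lemma glued_not_grid_induced i : i \in A :&: B -> ~ grid_induced G.
Proof.
rewrite inE => /andP [iA iB] [f [f_inj f_adj]].
pose F p := f (vertex_at p).
have F_neq p q : region p -> region q -> p != q -> F p != F q.
  by move=> p_in q_in; apply: contra_neq => /f_inj /(congr1 pos); rewrite !vertex_atK.
have F_adj p q : region p -> region q -> layout_adj A B p q -> grid_adj (F p) (F q).
  by move=> p_in q_in pq; rewrite -f_adj adj_pos !vertex_atK.
have F_frame_inj : {in frame width &, injective F}.
  move=> p q /frame_region p_in /frame_region q_in /eqP; apply: contraTeq.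
  exact: F_neq.
have F_frame_adj : {in frame width &, forall p q,
    grid_adj (zpoint p) (zpoint q) -> grid_adj (F p) (F q)}.
  move=> p q p_in q_in pq; apply: F_adj; try exact: frame_region.
  exact: frame_layout_adj.
have [c tA tB] : exists2 c, tooth A c & tooth B c.
  by exists (i.*2 + 6); apply/exists_inP; exists i.
case: c tA tB => [|d] tA tB; first by have := tooth_bound tA.
have teeth_adj : grid_adj (F (d.+1, 3)) (F (d.+1, 2)).
  apply: (frame_teeth_adj width_gt1 F_frame_inj F_frame_adj (d := d));
    try by first [apply: F_neq | apply: F_adj]; tooth_arith.
  by have := tooth_bound tA; rewrite /width; lia.
have : adj (vertex_at (d.+1, 3)) (vertex_at (d.+1, 2)) by rewrite f_adj; exact: teeth_adj.
by rewrite adj_pos !vertex_atK; tooth_arith.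
Qed.

Definition box (p : nat * nat) : bool := (2 <= p.1 <= 4) && (p.2 <= 1).

Lemma box_region p : box p -> region p.
Proof. by case: p => x y; rewrite /box; layout_arith. Qed.

Lemma box_layout_adj p q : box p -> box q -> layout_adj A B p q = grid_adj (zpoint p) (zpoint q).
Proof. by case: p q => x y [x' y']; rewrite /box; layout_arith. Qed.

Lemma mem_glue_NS u : (u \in glue_NS (left_graph A) (right_graph B)) = box (pos u).
Proof.
rewrite /glue_NS /closed_nbhd inE.
have -> : [exists i, u == glue_sp (left_graph A) (right_graph B) i] =
          [exists i : 'I_2, pos u == (3, val i)].
  by apply: eq_existsb => i; rewrite -(inj_eq pos_inj).
have -> : [exists i, adj u (glue_sp (left_graph A) (right_graph B) i)] =
          [exists i : 'I_2, layout_adj A B (pos u) (3, val i)].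
  by apply: eq_existsb => i; rewrite adj_pos.
have := pos_region u; case: (pos u) => x y u_in; apply/idP/idP.
  by case/orP => /existsP [[j j_lt] /=]; move: u_in; rewrite /box; layout_arith.
move=> xy_box; have y_lt : y < 2 by move: xy_box; rewrite /box /=; lia.
have [x3|x_ne] := eqVneq x 3.
  by apply/orP; left; apply/existsP; exists (Ordinal y_lt); rewrite x3.
apply/orP; right; apply/existsP; exists (Ordinal y_lt).
by move: xy_box x_ne; rewrite /box; layout_arith.
Qed.

Lemma card_glue_NS : #|glue_NS (left_graph A) (right_graph B)| <= 6.
Proof.
pose at_box (j : 'I_3 * 'I_2) := vertex_at (j.1 + 2, val j.2).
have sub_box : glue_NS (left_graph A) (right_graph B) \subset at_box @: setT.
  apply/subsetP => u; rewrite mem_glue_NS => u_box; apply/imsetP.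
  rewrite -(vertex_at_pos u); move: (pos u) u_box => [x y] /andP [/= x_box y_lt].
  exists (inord (x - 2), inord y); rewrite ?inE // /at_box /= !inordK; try lia.
  by congr (vertex_at (_, _)); lia.
apply: leq_trans (subset_leq_card sub_box) _; apply: leq_trans (leq_imset_card _ _) _.
by rewrite cardsT card_prod !card_ord.
Qed.

End Glued.

Local Notation NS A B := (induced (glue_NS (left_graph A) (right_graph B))).

Lemma ns_transfer_subproof A B A' B' (x : vert (NS A B)) :
  vertex_at A' B' (pos (val x)) \in glue_NS (left_graph A') (right_graph B').
Proof.
have x_box : box (pos (val x)) by rewrite -mem_glue_NS; apply: valP.
by rewrite mem_glue_NS vertex_atK ?box_region.
Qed.

Definition ns_transfer A B A' B' (x : vert (NS A B)) : vert (NS A' B') :=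
  exist (fun u => u \in glue_NS (left_graph A') (right_graph B')) _
    (ns_transfer_subproof A' B' x).

Lemma pos_ns_transfer A B A' B' x : pos (val (@ns_transfer A B A' B' x)) = pos (val x).
Proof. by rewrite vertex_atK // box_region // -mem_glue_NS; apply: valP. Qed.

Lemma glue_NS_iso A B A' B' : exists phi : vert (NS A B) -> vert (NS A' B'),
  iso_graph phi /\ forall x i, val x = glue_sp (left_graph A) (right_graph B) i ->
                               val (phi x) = glue_sp (left_graph A') (right_graph B') i.
Proof.
have x_box A1 B1 (x : vert (NS A1 B1)) : box (pos (val x)).
  by rewrite -mem_glue_NS; apply: valP.
exists (@ns_transfer A B A' B'); split; [split|].
- exists (@ns_transfer A' B' A B) => x; apply/val_inj/pos_inj; by rewrite !pos_ns_transfer.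
- move=> x y; change (adj (val (ns_transfer A' B' x)) (val (ns_transfer A' B' y)) =
                      adj (val x) (val y)).
  by rewrite !adj_pos !pos_ns_transfer !box_layout_adj.
- by move=> x i xi; apply: pos_inj; rewrite pos_ns_transfer xi.
Qed.

End Construction.

Theorem corollary5p6 : disjointness_expressing grid_induced 6 1.
Proof.
exists (IZR 60); split; first lra.
move=> N N_gt0; exists 2, (@left_graph N), (@right_graph N); split.
  by move=> X; split; [exact: good_left_graph | exact: good_right_graph].
split.
  move=> A B; split; first exact: glued_connected.
  have card_le : #|vert (glue (left_graph A) (right_graph B))| <= 60 * N.
    by apply: leq_trans (card_glued A B) _; rewrite /width; lia.
  have -> : INR 1 = IZR 1 by [].
  rewrite Rinv_1 Rpower_1; last by apply: lt_0_INR; apply/ltP.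
  by apply: Rle_trans (le_INR _ _ (leP card_le)) _; rewrite mult_INR (INR_IZR_INZ 60); right.
split; first by move=> A A' B B'; apply: glue_NS_iso.
split; first exact: card_glue_NS.
move=> A B; split; last exact: glued_grid_induced.
by have [//|[i /glued_not_grid_induced]] := set_0Vmem (A :&: B).
Qed.
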